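(* Let $(X,\alpha)$ be a Cantor minimal system, $m\ge1$, and let $c:X\to\mathbb{Z}_m$ be a continuous function. Suppose that $\alpha\times c$, $(x,k)\mapsto(\alpha(x),k+c(x))$, is a minimal homeomorphism of $X\times\mathbb{Z}_m$. Then \[ T\big(K^0(X\times\mathbb{Z}_m,\alpha\times c)/\pi^*(K^0(X,\alpha))\big)\cong\mathbb{Z}_m, \] and a generator of this group is the image of the class of the $\mathbb{Z}$-valued continuous function \[ f_0(x,k)=\begin{cases}1 & c(\alpha^{-1}(x))\neq0\text{ and }k\in\{0,1,\dots,c(\alpha^{-1}(x))-1\},\\ 0&\text{otherwise}.\end{cases} \]
   Context: A Cantor minimal system $(X,\alpha)$ is a Cantor set $X$ with a homeomorphism $\alpha$ having no nontrivial closed invariant subsets. $\mathbb{Z}_m=\mathbb{Z}/m\mathbb{Z}$, identified with $\{0,1,\dots,m-1\}$. For a minimal homeomorphism $\gamma$ of a Cantor set $Z$, $K^0(Z,\gamma)=C(Z,\mathbb{Z})/\{f-f\circ\gamma^{-1}:f\in C(Z,\mathbb{Z})\}$. $\pi:X\times\mathbb{Z}_m\to X$ is the first-coordinate projection and $\pi^*:K^0(X,\alpha)\to K^0(X\times\mathbb{Z}_m,\alpha\times c)$ is $[g]\mapsto[g\circ\pi]$. $T(G)$ denotes the torsion subgroup of an abelian group $G$. *)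

From HB Require Import structures.
From mathcomp Require Import all_boot all_order all_algebra.
From mathcomp Require Import all_classical all_reals all_analysis.
Set Implicit Arguments. Unset Strict Implicit. Unset Printing Implicit Defensive.
Import Order.TTheory GRing.Theory Num.Theory.
Local Open Scope classical_set_scope.
Local Open Scope ring_scope.

Definition cantor_set (X : topologicalType) : Prop :=
  exists (f : X -> cantor_space) (g : cantor_space -> X),
    [/\ cancel f g, cancel g f, continuous f & continuous g].

Definition minimal_homeo (Z : topologicalType) (g ginv : Z -> Z) : Prop :=
  [/\ cancel g ginv, cancel ginv g, continuous g, continuous ginv &
      forall A : set Z, closed A -> g @` A = A -> A = set0 \/ A = setT].

Definition cantor_minimal_system (X : topologicalType) (alpha alphainv : X -> X) :=
  cantor_set X /\ minimal_homeo alpha alphainv.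

Definition CZ (Z : topologicalType) (f : Z -> int) : Prop :=
  continuous (f : Z -> discrete_topology int).

Definition zm_add (m : nat) : 'I_m -> 'I_m -> 'I_m :=
  match m as m0 return 'I_m0 -> 'I_m0 -> 'I_m0 with
  | 0 => fun k _ => k
  | n.+1 => fun k j => (k + j)%R
  end.
Definition zm_sub (m : nat) : 'I_m -> 'I_m -> 'I_m :=
  match m as m0 return 'I_m0 -> 'I_m0 -> 'I_m0 with
  | 0 => fun k _ => k
  | n.+1 => fun k j => (k - j)%R
  end.

Definition XZm (X : topologicalType) (m : nat) : topologicalType :=
  (X * discrete_topology 'I_m)%type.

Definition skewp (X : topologicalType) (m : nat) (alpha : X -> X) (c : X -> 'I_m)
  (p : XZm X m) : XZm X m := (alpha p.1, zm_add p.2 (c p.1)).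
Definition skewp_inv (X : topologicalType) (m : nat) (alphainv : X -> X)
  (c : X -> 'I_m) (p : XZm X m) : XZm X m :=
  (alphainv p.1, zm_sub p.2 (c (alphainv p.1))).

(* Coboundaries {f - f o gamma^{-1} : f in C(Z,Z)}: K^0(Z,gamma) = C(Z,Z)/coboundaries. *)
Definition coboundary (Z : topologicalType) (ginv : Z -> Z) (h : Z -> int) : Prop :=
  exists f : Z -> int, CZ f /\ h = (fun z => f z - f (ginv z)).

(* The subgroup of C(X x Z_m, Z) whose image in K^0(X x Z_m, alpha x c) is
   pi^*(K^0(X,alpha)), i.e. the kernel of
   C(X x Z_m, Z) -> K^0(X x Z_m, alpha x c) / pi^*(K^0(X, alpha)). *)
Definition pistar_subgroup (X : topologicalType) (m : nat) (alphainv : X -> X)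
  (c : X -> 'I_m) (h : XZm X m -> int) : Prop :=
  exists (b : XZm X m -> int) (g : X -> int),
    [/\ coboundary (skewp_inv alphainv c) b, CZ g &
        h = (fun p => b p + g p.1)].

Definition f0 (X : topologicalType) (m : nat) (alphainv : X -> X) (c : X -> 'I_m)
  (p : XZm X m) : int :=
  if ((c (alphainv p.1) : nat) != 0%N) && ((p.2 : nat) < c (alphainv p.1))%N
  then 1 else 0.

From HB Require Import structures.
From mathcomp Require Import all_boot all_order all_algebra.
From mathcomp Require Import all_classical all_reals all_analysis.
From mathcomp Require Import zify ring.
Import Order.TTheory GRing.Theory Num.Theory.
Local Open Scope classical_set_scope.
Local Open Scope ring_scope.
Set Implicit Arguments. Unset Strict Implicit. Unset Printing Implicit Defensive.

(* Let sigma (x, k) = (x, k + 1); it commutes with gamma = alpha x c.  With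
   level (x, k) = k, the identity m f0 = level o gamma^-1 - level + c o alphainv o pi
   puts m [f0] in pi^* (coboundaries plus pullbacks of C(X, Z)).  A function h lies
   in pi^* iff h - h o sigma = B - B o gamma^-1 for a locally constant B with zero
   sums over the fibres of pi: given such B, its primitive V along sigma on each
   fibre makes h + V - V o gamma^-1 sigma-invariant, i.e. a function of x.  As
   f0 - f0 o sigma = E o gamma^-1 - E for the indicator E of the top level, k f0 in
   pi^* makes B + k E gamma-invariant, hence equal to a constant C by minimality,
   and summing over a fibre gives m C = k.  If N g is in pi^*, the corresponding B
   is constant modulo N (minimality again), so g - g o sigma = B' - B' o gamma^-1
   where B' has a constant fibre sum s; then g + s f0, and hence g - j f0 for
   j = -s mod m, is in pi^*. *)

Definition locally_constant {Z : topologicalType} {T : Type} (f : Z -> T) :=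
  forall z, \forall w \near z, f w = f z.

Section LocallyConstant.
Variable Z : topologicalType.
Implicit Types (T A B : Type).

Lemma continuous_discreteP (T : choiceType) (f : Z -> discrete_topology T) :
  continuous f <-> locally_constant f.
Proof.
split=> [cf z | lcf z B /=]; first exact: cf z [set f z] (discrete_set1 _).
by rewrite nbhs_principalE => Bfz; apply: filterS (lcf z) => w /= ->; exact: Bfz.
Qed.

Lemma locally_constant_comp (W : topologicalType) T (h : Z -> W) (f : W -> T) :
  continuous h -> locally_constant f -> locally_constant (f \o h).
Proof. by move=> ch lcf z; exact: ch z _ (lcf (h z)). Qed.

Lemma locally_constant_cst T (t : T) : locally_constant (fun _ : Z => t).
Proof. by move=> z; apply: nearW. Qed.

Lemma locally_constant_map A T (phi : A -> T) (a : Z -> A) :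
  locally_constant a -> locally_constant (phi \o a).
Proof. by move=> lca z; apply: filterS (lca z) => w /= ->. Qed.

Lemma locally_constant_map2 A B T (phi : A -> B -> T) (a : Z -> A) (b : Z -> B) :
  locally_constant a -> locally_constant b ->
  locally_constant (fun z => phi (a z) (b z)).
Proof.
by move=> lca lcb z; apply: filterS (filterI (lca z) (lcb z)) => w [/= -> ->].
Qed.

Lemma locally_constant_sum I (r : seq I) (P : pred I) (F : I -> Z -> int) :
  (forall i, locally_constant (F i)) ->
  locally_constant (fun z => \sum_(i <- r | P i) F i z).
Proof.
move=> lcF; elim: r => [|i r IHr].
  by under eq_fun do rewrite big_nil; exact: locally_constant_cst.
under eq_fun do rewrite big_cons.
by case: (P i) => //; exact: locally_constant_map2.
Qed.

End LocallyConstant.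

Lemma minimal_invariant_constant (Z : topologicalType) (g ginv : Z -> Z) T (h : Z -> T) :
  minimal_homeo g ginv -> locally_constant h -> (forall p, h (ginv p) = h p) ->
  forall p q, h p = h q.
Proof.
case=> gK ginvK _ _ gmin lch hinv p q.
pose A := [set w | h w = h p].
have closedA : closed A.
  by move=> w /(_ _ (lch w)) [v [Av hvw]]; rewrite /A /= -hvw.
have gA : g @` A = A.
  apply/seteqP; split=> [_ [w Aw <-] | w Aw]; last first.
    by exists (ginv w); rewrite /A /= ?hinv.
  by rewrite /A /= -Aw -[in RHS](gK w) hinv.
case: (gmin A closedA gA) => [A0 | AT]; last by have : A q by rewrite AT.
by have : A p by []; rewrite A0.
Qed.

Lemma minimal_coboundary_divz (Z : topologicalType) (g ginv : Z -> Z) (z0 : Z)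
    (N : int) (B d : Z -> int) :
  minimal_homeo g ginv -> N != 0 -> locally_constant B ->
  (forall p, d p * N = B p - B (ginv p)) ->
  exists B' c0, [/\ locally_constant B', forall p, B p = B' p * N + c0
                  & forall p, d p = B' p - B' (ginv p)].
Proof.
move=> gmin N0 lcB dB.
pose r p := (B p %% N)%Z.
have r_inv p : r (ginv p) = r p.
  by rewrite /r (_ : B (ginv p) = - d p * N + B p) ?modzMDl // mulNr dB opprB subrK.
have r_cst p : r p = r z0.
  have lcr := locally_constant_map (fun b => (b %% N)%Z) lcB.
  exact: minimal_invariant_constant gmin lcr r_inv p z0.
exists (fun p => (B p %/ N)%Z), (r z0); split.
- exact: (locally_constant_map (fun b => (b %/ N)%Z) lcB).
- by move=> p; rewrite -(r_cst p) [LHS](divz_eq _ N).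
- move=> p; apply: (mulIf N0); rewrite dB mulrBl.
  rewrite {1}(divz_eq (B p) N) {1}(divz_eq (B (ginv p)) N).
  by rewrite -[(B (ginv p) %% N)%Z]/(r (ginv p)) r_inv opprD addrACA subrr addr0.
Qed.

Section Product.
Variables (X : topologicalType) (N : nat).

Lemma locally_constant_XZm T (f : XZm X N -> T) :
  (forall j, locally_constant (fun x => f (x, j))) -> locally_constant f.
Proof.
move=> lcf [x j]; exists ([set w | f (w, j) = f (x, j)], [set j]).
  by split; [exact: lcf | exact: (@discrete_set1 (discrete_topology 'I_N))].
by move=> [w k] [/= fw ->].
Qed.

Lemma locally_constant_slice T (f : XZm X N -> T) j :
  locally_constant f -> locally_constant (fun x => f (x, j)).
Proof.
move=> lcf x; have [[P Q] [/= nP nQ] PQ] := lcf (x, j).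
apply: filterS nP => w Pw; apply: (PQ (w, j)).
by split=> //; exact: nbhs_singleton nQ.
Qed.

End Product.

Section CyclicOrdinal.
Variable n : nat.
Implicit Types j k : 'I_n.+1.

Lemma ordS_addZp1 j : ordS j = j + Zp1.
Proof. by apply: val_inj; rewrite /= modnDmr addn1. Qed.

Lemma val_ordS j : (ordS j + (j == ord_max) * n.+1 = j.+1)%N.
Proof.
rewrite /= -val_eqE /=; have := ltn_ord j; rewrite ltnS leq_eqVlt.
case/orP => [/eqP -> | jn]; first by rewrite modnn eqxx mul1n.
by rewrite modn_small ?(ltn_eqF jn) ?mul0n ?addn0.
Qed.

Lemma val_subZp j k : ((j - k)%R + k = j + (j < k) * n.+1)%N.
Proof.
rewrite /= modnDmr; have := ltn_ord j; have := ltn_ord k.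
case: (ltnP j k) => jk kn jn.
  rewrite modn_small; lia.
rewrite -[(j + _)%N](@subnK n.+1) ?modnDr ?modn_small; lia.
Qed.

Lemma ordS_invariant_constant T (u : 'I_n.+1 -> T) :
  (forall j, u (ordS j) = u j) -> forall j, u j = u ord0.
Proof.
move=> uS j; rewrite -[j]inord_val; elim: (val j) (ltn_ord j) => [|i IHi] i_lt.
  by congr u; apply: val_inj; rewrite /= inordK.
have -> : inord i.+1 = ordS (inord i : 'I_n.+1).
  by apply: val_inj; rewrite /= !inordK ?modn_small // ltnW.
by rewrite uS IHi // ltnW.
Qed.

Definition prefix_sum (V : zmodType) (h : 'I_n.+1 -> V) j := \sum_(i < j) h (inord i).

Lemma prefix_sum_ordS (V : zmodType) (h : 'I_n.+1 -> V) j :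
  \sum_i h i = 0 -> prefix_sum h (ordS j) = prefix_sum h j + h j.
Proof.
rewrite /prefix_sum; have [-> h0 | jmax _] := eqVneq j ord_max.
  have -> : nat_of_ord (ordS (@ord_max n)) = 0%N by rewrite /= modnn.
  rewrite big_ord0 -{1}h0 big_ord_recr /=; congr (_ + _).
  by apply: eq_bigr => i _; congr h; apply: val_inj; rewrite /= inordK // ltnS ltnW.
have -> : nat_of_ord (ordS j) = j.+1.
  by have := val_ordS j; rewrite (negbTE jmax) mul0n addn0.
by rewrite big_ord_recr /= inord_val.
Qed.

End CyclicOrdinal.

Section SkewProduct.
Variables (X : topologicalType) (alphainv : X -> X) (n : nat) (c : X -> 'I_n.+1).
Hypotheses (alphainv_cont : continuous alphainv)
  (c_cont : continuous (c : X -> discrete_topology 'I_n.+1))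
  (skewp_inv_cont : continuous (skewp_inv alphainv c)).

Local Notation XZ := (XZm X n.+1).
Local Notation ginv := (skewp_inv alphainv c).
Local Notation pistar := (pistar_subgroup alphainv c).
Local Notation f0 := (f0 alphainv c).

Definition shift (p : XZ) : XZ := (p.1, ordS p.2).
Definition top_level (p : XZ) : int := (p.2 == ord_max)%:R.
Definition level (p : XZ) : int := (p.2 : nat)%:Z.

Lemma skewp_inv_shift p : ginv (shift p) = shift (ginv p).
Proof. by case: p => x j; rewrite /shift /skewp_inv /= !ordS_addZp1 addrAC. Qed.

Lemma skewp_invE x j : ginv (x, j) = (alphainv x, j - c (alphainv x)).
Proof. by []. Qed.

Lemma level_shift p : level (shift p) = level p + 1 - top_level p *+ n.+1.
Proof.
case: p => x j; have := val_ordS j; rewrite /level /top_level /=.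
by case: (_ == _); lia.
Qed.

Lemma f0E p : f0 p = (p.2 < c (alphainv p.1))%N%:R.
Proof.
rewrite /f0; case: ltnP => [lt_k | _]; rewrite ?andbF ?andbT //.
by rewrite -lt0n (leq_ltn_trans (leq0n _) lt_k).
Qed.

Lemma f0_mulm p :
  f0 p *+ n.+1 = level (ginv p) - level p + (c (alphainv p.1) : nat)%:Z.
Proof.
case: p => x j; rewrite f0E skewp_invE /level.
have := val_subZp j (c (alphainv x)); set d := (j - _)%R; rewrite /=; lia.
Qed.

Lemma f0_shift p : f0 p - f0 (shift p) = top_level (ginv p) - top_level p.
Proof.
apply: (@pmulrnI _ n.+1) => //.
rewrite !mulrnBl !f0_mulm skewp_inv_shift !level_shift.
by rewrite /shift /=; lia.
Qed.

Lemma locally_constant_shift T (f : XZ -> T) :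
  locally_constant f -> locally_constant (f \o shift).
Proof.
by move=> lcf; apply: locally_constant_XZm => j; exact: (locally_constant_slice (ordS j) lcf).
Qed.

Lemma locally_constant_skewp_inv T (f : XZ -> T) :
  locally_constant f -> locally_constant (f \o ginv).
Proof. exact: locally_constant_comp. Qed.

Lemma locally_constant_c_alphainv : locally_constant (c \o alphainv).
Proof. by apply: locally_constant_comp => //; exact/continuous_discreteP. Qed.

Lemma locally_constant_f0 : locally_constant f0.
Proof.
apply: locally_constant_XZm => j.
have -> : (fun x => f0 (x, j)) = (fun k : 'I_n.+1 => (j < k)%N%:R) \o (c \o alphainv).
  by apply: funext => x; rewrite f0E.
exact: (locally_constant_map _ locally_constant_c_alphainv).
Qed.

Lemma locally_constant_top_level : locally_constant top_level.
Proof. by apply: locally_constant_XZm => j z; apply: nearW. Qed.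

Lemma locally_constant_level : locally_constant level.
Proof. by apply: locally_constant_XZm => j z; apply: nearW. Qed.

Lemma sum_fibre_shift_diff (f : XZ -> int) x :
  \sum_(j < n.+1) (f (x, j) - f (shift (x, j))) = 0.
Proof. by rewrite sumrB (reindex_inj (@ordS_inj _)) subrr. Qed.

Lemma sum_fibre_top_level x : \sum_(j < n.+1) top_level (x, j) = 1.
Proof.
by rewrite (bigD1 ord_max) //= /top_level /= eqxx big1 ?addr0 // => j /negbTE ->.
Qed.

Lemma pistar_coboundary b :
  locally_constant b -> pistar (fun p => b p - b (ginv p)).
Proof.
move=> lcb; exists (fun p => b p - b (ginv p)), (fun=> 0); split.
- by exists b; split=> //; exact/continuous_discreteP.
- by apply/continuous_discreteP; exact: locally_constant_cst.
- by apply: funext => p; rewrite addr0.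
Qed.

Lemma pistar_pullback g : locally_constant g -> pistar (fun p => g p.1).
Proof.
move=> lcg; exists (fun=> 0), g; split.
- exists (fun=> 0); split; last by rewrite subr0.
  by apply/continuous_discreteP; exact: locally_constant_cst.
- exact/continuous_discreteP.
- by apply: funext => p; rewrite add0r.
Qed.

Lemma pistarD h1 h2 : pistar h1 -> pistar h2 -> pistar (fun p => h1 p + h2 p).
Proof.
move=> [_ [g1 [[b1 [/continuous_discreteP lcb1 ->]] /continuous_discreteP lcg1 ->]]].
move=> [_ [g2 [[b2 [/continuous_discreteP lcb2 ->]] /continuous_discreteP lcg2 ->]]].
exists (fun p => (b1 p + b2 p) - (b1 (ginv p) + b2 (ginv p))), (fun x => g1 x + g2 x).
split; last by apply: funext => p; lia.
- exists (fun p => b1 p + b2 p); split=> //.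
  by apply/continuous_discreteP; exact: (locally_constant_map2 +%R).
- by apply/continuous_discreteP; exact: (locally_constant_map2 +%R).
Qed.

Lemma pistarMz h z : pistar h -> pistar (fun p => h p * z).
Proof.
move=> [_ [g [[b [/continuous_discreteP lcb ->]] /continuous_discreteP lcg ->]]].
exists (fun p => b p * z - b (ginv p) * z), (fun x => g x * z).
split; last by apply: funext => p; rewrite mulrDl mulrBl.
- exists (fun p => b p * z); split=> //.
  by apply/continuous_discreteP; exact: (locally_constant_map ( *%R^~ z)).
- by apply/continuous_discreteP; exact: (locally_constant_map ( *%R^~ z)).
Qed.

Lemma pistar_f0_mulm : pistar (fun p => f0 p *+ n.+1).
Proof.
have lc_nlevel : locally_constant (fun p => - level p).
  exact: (locally_constant_map -%R locally_constant_level).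
have lc_g0 : locally_constant (fun x => (c (alphainv x) : nat)%:Z).
  exact: (locally_constant_map (fun k : 'I_n.+1 => (k : nat)%:Z) locally_constant_c_alphainv).
rewrite (_ : (fun p => _) =
  fun p => (- level p - - level (ginv p)) + (c (alphainv p.1) : nat)%:Z).
  exact: pistarD (pistar_coboundary lc_nlevel) (pistar_pullback lc_g0).
by apply: funext => p; rewrite f0_mulm; lia.
Qed.

Lemma pistar_shift_diff h : pistar h ->
  exists2 B : XZ -> int, locally_constant B /\ (forall x, \sum_(j < n.+1) B (x, j) = 0)
    & forall p, h p - h (shift p) = B p - B (ginv p).
Proof.
move=> [_ [g [[b [/continuous_discreteP lcb ->]] _ ->]]].
exists (fun p => b p - b (shift p)); first split.
- exact: (locally_constant_map2 (fun u v => u - v) lcb (locally_constant_shift lcb)).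
- exact: sum_fibre_shift_diff.
- by move=> p; rewrite skewp_inv_shift /shift /=; lia.
Qed.

Lemma pistar_of_shift_diff (h B : XZ -> int) :
  locally_constant h -> locally_constant B -> (forall x, \sum_(j < n.+1) B (x, j) = 0) ->
  (forall p, h p - h (shift p) = B p - B (ginv p)) -> pistar h.
Proof.
move=> lch lcB sumB dh.
pose V (p : XZ) : int := prefix_sum (fun j => B (p.1, j)) p.2.
have dV p : V (shift p) = V p + B p.
  by case: p => x j; exact: prefix_sum_ordS.
have lcV : locally_constant V.
  apply: locally_constant_XZm => j; rewrite /V /prefix_sum /=.
  by apply: locally_constant_sum => i; exact: locally_constant_slice.
pose R (p : XZ) : int := h p + (V p - V (ginv p)).
have lcR : locally_constant R.
  exact: (locally_constant_map2 +%R lch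
            (locally_constant_map2 (fun u v => u - v) lcV (locally_constant_skewp_inv lcV))).
have R_shift x j : R (x, ordS j) = R (x, j).
  have := dh (x, j); have := dV (x, j); have := dV (ginv (x, j)).
  by rewrite /R -skewp_inv_shift /shift /=; lia.
have R_fst p : R p = R (p.1, ord0).
  by case: p => x j; exact: ordS_invariant_constant (R_shift x) j.
have -> : h = fun p => R (p.1, ord0) + (- V p - - V (ginv p)).
  by apply: funext => p; rewrite -R_fst /R; lia.
apply: pistarD; first exact: pistar_pullback (locally_constant_slice ord0 lcR).
exact: pistar_coboundary (locally_constant_map -%R lcV).
Qed.

Section Minimal.
Variables (alpha : X -> X) (x0 : X).
Hypothesis skewp_minimal : minimal_homeo (skewp alpha c) ginv.

Lemma f0_mul_notin_pistar k : (0 < k < n.+1)%N -> ~ pistar (fun p => f0 p *+ k).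
Proof.
move=> /andP[k_gt0 k_lt] /pistar_shift_diff[B [lcB sumB] dB].
pose h p := B p + top_level p *+ k.
have lch : locally_constant h.
  exact: (locally_constant_map2 (fun u v => u + v *+ k) lcB locally_constant_top_level).
have h_inv p : h (ginv p) = h p.
  by have := dB p; rewrite -mulrnBl f0_shift mulrnBl /h; lia.
have h_cst p : h p = h (x0, ord0).
  exact: minimal_invariant_constant skewp_minimal lch h_inv p _.
have : \sum_(j < n.+1) h (x0, j) = k%:Z.
  by rewrite big_split /= sumB add0r sumrMnl sum_fibre_top_level natz.
rewrite (eq_bigr _ (fun j _ => h_cst (x0, j))) sumr_const card_ord.
move: (h (x0, ord0)) => C; rewrite -mulr_natr.
by have [C_le0 | C_gt0] := lerP C 0; nia.
Qed.

Lemma torsion_multiple_f0 (g : XZ -> int) N : locally_constant g -> (0 < N)%N ->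
  pistar (fun p => g p *+ N) -> exists j : nat, pistar (fun p => g p - f0 p *+ j).
Proof.
move=> lcg N_gt0 /pistar_shift_diff[B [lcB sumB] dB].
have N0 : N%:R != 0 :> int by rewrite pnatr_eq0 -lt0n.
have dBN p : (g p - g (shift p)) * N%:R = B p - B (ginv p).
  by rewrite mulr_natr mulrnBl dB.
have [B' [c0 [lcB' BE dB']]] :=
  minimal_coboundary_divz ((x0, ord0) : XZ) skewp_minimal N0 lcB dBN.
have sumB'N x : (\sum_(j < n.+1) B' (x, j)) * N%:R = - (c0 *+ n.+1).
  apply/eqP; rewrite -addr_eq0; apply/eqP.
  rewrite -[RHS](sumB x) (eq_bigr _ (fun j _ => BE (x, j))).
  by rewrite big_split /= sumr_const card_ord mulr_suml.
pose s := \sum_(j < n.+1) B' (x0, j).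
have sumB' x : \sum_(j < n.+1) B' (x, j) = s by apply: (mulIf N0); rewrite !sumB'N.
have pistar_gs : pistar (fun p => g p + f0 p * s).
  apply: (@pistar_of_shift_diff _ (fun p => B' p - top_level p * s)).
  - exact: (locally_constant_map2 (fun u v => u + v * s) lcg locally_constant_f0).
  - exact: (locally_constant_map2 (fun u v => u - v * s) lcB' locally_constant_top_level).
  - by move=> x; rewrite sumrB -mulr_suml sum_fibre_top_level sumB' mul1r subrr.
  - move=> p; have := dB' p; have := congr1 ( *%R^~ s) (f0_shift p).
    by rewrite /= !mulrBl; lia.
pose r := absz ((- s) %% n.+1%:R)%Z; pose t := ((- s) %/ n.+1%:R)%Z.
have s_div : - s = t * n.+1%:R + r%:Z.
  by rewrite /r gez0_abs ?modz_ge0 ?pnatr_eq0 // [LHS](divz_eq _ n.+1%:R).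
exists r; rewrite (_ : (fun p => _) = fun p => (g p + f0 p * s) + f0 p *+ n.+1 * t).
  exact: pistarD pistar_gs (pistarMz t pistar_f0_mulm).
apply: funext => p; rewrite -[f0 p *+ r]mulr_natr -[f0 p *+ n.+1]mulr_natr.
have -> : (r%:R : int) = - s - t * n.+1%:R by rewrite natz s_div addrAC subrr add0r.
by ring.
Qed.

End Minimal.

End SkewProduct.

Theorem lemma4p5 (X : topologicalType) (alpha alphainv : X -> X) (m : nat)
  (c : X -> 'I_m) :
  cantor_minimal_system alpha alphainv ->
  (1 <= m)%N ->
  continuous (c : X -> discrete_topology 'I_m) ->
  minimal_homeo (skewp alpha c) (skewp_inv alphainv c) ->
  [/\ CZ (f0 alphainv c),
      pistar_subgroup alphainv c (fun p => f0 alphainv c p *+ m),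
      (forall k : nat, (0 < k < m)%N ->
         not (pistar_subgroup alphainv c (fun p => f0 alphainv c p *+ k))) &
      (forall g : XZm X m -> int, CZ g ->
         (exists n : nat, (0 < n)%N /\ pistar_subgroup alphainv c (fun p => g p *+ n)) ->
         exists j : nat, pistar_subgroup alphainv c (fun p => g p - f0 alphainv c p *+ j))].
Proof.
move=> [[_ [to_X _]] [_ _ _ alphainv_cont _]].
case: m c => [//|n] c _ c_cont skewp_minimal.
have [_ _ _ skewp_inv_cont _] := skewp_minimal.
pose x0 := to_X (fun=> false).
split.
- exact/continuous_discreteP/locally_constant_f0.
- exact: pistar_f0_mulm.
- exact: f0_mul_notin_pistar x0 skewp_minimal.
- move=> g /continuous_discreteP lcg [N [N_gt0 gN]].
  exact: torsion_multiple_f0 x0 skewp_minimal g N lcg N_gt0 gN.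
Qed.
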